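(* Let $G$ be a connected undirected graph with positive edge weights, weighted adjacency matrix $\mathbf{A}$, degree matrix $\mathbf{D}$ (degrees $d_u$) and Laplacian $\mathbf{L}=\mathbf{D}-\mathbf{A}$, and let $\pi=\frac{\mathbf{D}\mathbf{1}}{\mathbf{1}^\top\mathbf{D}\mathbf{1}}$. For each vertex $u$ define $\sigma_u=\frac12\sum_{t=0}^\infty\left(\left(\frac12\mathbf{I}+\frac12\mathbf{A}\mathbf{D}^{-1}\right)^t\mathbf{1_u}-\pi\right)$. Let $\varepsilon>0$ and suppose vectors $\widetilde{\sigma}_u$ satisfy $\|\widetilde{\sigma}_u-\sigma_u\|_\infty\le\varepsilon/4$ for all $u$. Then for every edge $(u,v)$ of $G$, the quantity $$\frac{1}{d_u}(\widetilde{\sigma}_u)_u-\frac{1}{d_v}(\widetilde{\sigma}_u)_v+\frac{1}{d_v}(\widetilde{\sigma}_v)_v-\frac{1}{d_u}(\widetilde{\sigma}_v)_u$$ is a $(1+\varepsilon)$-approximation to the effective resistance $R(u,v)$.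
   Context: $R(u,v)=(\mathbf{1_u}-\mathbf{1_v})^\top\mathbf{L}^+(\mathbf{1_u}-\mathbf{1_v})$ with $\mathbf{L}^+$ the pseudoinverse. A $(1+\varepsilon)$-approximation $\widetilde R$ of $R$ satisfies $(1-\varepsilon)R\le\widetilde R\le(1+\varepsilon)R$. *)

From HB Require Import structures.
From mathcomp Require Import all_boot all_order all_algebra.
From mathcomp Require Import all_classical all_reals all_analysis.
Set Implicit Arguments. Unset Strict Implicit. Unset Printing Implicit Defensive.
Import Order.TTheory GRing.Theory Num.Theory.
Local Open Scope ring_scope.
Local Open Scope classical_set_scope.
Import numFieldNormedType.Exports.

Section Defs.
Variables (R : realType) (n : nat).
Implicit Types (A L X : 'M[R]_n) (u v x : 'I_n).

Definition deg A u : R := \sum_(v < n) A u v.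

Definition degmx A : 'M[R]_n := \matrix_(i, j) ((i == j)%:R * deg A i).

Definition laplacian A : 'M[R]_n := degmx A - A.

Definition connected_graph A : Prop :=
  forall u v, connect [rel x y | 0 < A x y] u v.

Definition is_pinv L X : Prop :=
  [/\ L *m X *m L = L, X *m L *m X = X,
      (L *m X)^T = L *m X & (X *m L)^T = X *m L].

Definition ind u : 'cV[R]_n := \col_i (i == u)%:R.

Definition effres X u v : R :=
  ((ind u - ind v)^T *m X *m (ind u - ind v)) 0 0.

Definition stat A x : R := deg A x / \sum_(y < n) deg A y.

Definition lazywalk A : 'M[R]_n :=
  \matrix_(i, j) ((i == j)%:R / 2 + A i j / (2 * deg A j)).

Definition walk A (t : nat) u x : R := (iter t (mulmx (lazywalk A)) (ind u)) x 0.

Definition is_sigma A (sig : 'I_n -> 'I_n -> R) : Prop :=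
  forall u x,
    (fun N : nat => 2^-1 * \sum_(t < N) (walk A t u x - stat A x)) @ \oo
      --> sig u x.

Definition eps_approx (eps r rt : R) : Prop :=
  (1 - eps) * r <= rt /\ rt <= (1 + eps) * r.

End Defs.

From HB Require Import structures.
From mathcomp Require Import all_boot all_order all_algebra.
From mathcomp Require Import all_classical all_reals all_analysis.
From mathcomp Require Import ring lra.
Set Implicit Arguments.
Unset Strict Implicit.
Unset Printing Implicit Defensive.
Import Order.TTheory GRing.Theory Num.Theory.
Import numFieldNormedType.Exports.
Local Open Scope ring_scope.
Local Open Scope classical_set_scope.

(* Let p_N be the N-th partial sum defining sigma_w and W the lazy walk.
   Since L D^-1 = 2 (I - W) and (I - W) pi = 0, the vector L D^-1 p_N
   telescopes to 1_w - W^N 1_w; as W^N 1_w = pi + 2 (p_(N+1) - p_N) tends to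
   pi, passing to the limit gives L D^-1 sigma_w = 1_w - pi.  Hence
   z = D^-1 (sigma_u - sigma_v) solves L z = 1_u - 1_v, so
   R(u,v) = z^T L z = z_u - z_v, which is the displayed expression evaluated at
   the exact sigma.  The approximation moves each of its four terms by at most
   eps / (4 d), i.e. the whole expression by at most (eps/2) (1/d_u + 1/d_v).
   Finally, for u <> v, nonnegativity of the Laplacian form at z - (1/d_u) 1_u,
   together with L_uu <= d_u, gives R(u,v) >= 1/d_u, and likewise
   R(u,v) >= 1/d_v. *)

Section QuadraticForms.
Variables (R : realType) (n : nat).
Implicit Types (L X : 'M[R]_n) (z w : 'cV[R]_n).

Definition qform L z : R := (z^T *m L *m z) 0 0.

Lemma ind_delta (u : 'I_n) : ind R u = delta_mx u 0.
Proof. by apply/matrixP => i j; rewrite !mxE (ord1 j) eqxx andbT. Qed.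

Lemma trmx_mul_ind w x : (w^T *m ind R x) 0 0 = w x 0.
Proof. by rewrite ind_delta -colE !mxE. Qed.

Lemma ind_trmx_mul w x : ((ind R x)^T *m w) 0 0 = w x 0.
Proof. by rewrite ind_delta trmx_delta -rowE mxE. Qed.

Lemma qform_subZind L z t x : L^T = L ->
  qform L (z - t *: ind R x) =
  qform L z - 2 * t * (L *m z) x 0 + t ^+ 2 * L x x.
Proof.
move=> L_sym; set e := ind R x.
have trE : (z - t *: e)^T = z^T - t *: e^T.
  by apply/matrixP => i j; rewrite !mxE.
have zLe : (z^T *m L *m e) 0 0 = (L *m z) x 0.
  by rewrite -trmx_mul_ind trmx_mul L_sym.
have eLz : (e^T *m L *m z) 0 0 = (L *m z) x 0 by rewrite -mulmxA ind_trmx_mul.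
have eLe : (e^T *m L *m e) 0 0 = L x x.
  by rewrite -mulmxA ind_trmx_mul /e ind_delta -colE mxE.
rewrite /qform trE !(mulmxBl, mulmxBr) -!scalemxAl -!scalemxAr.
move: zLe eLz eLe; set a := z^T *m L *m z; set b := z^T *m L *m e.
set c := e^T *m L *m z; set d := e^T *m L *m e.
by rewrite !mxE => -> -> ->; ring.
Qed.

Lemma invr_le_qform L z x d :
  L^T = L -> (forall w, 0 <= qform L w) -> 0 < d -> L x x <= d ->
  (L *m z) x 0 ^+ 2 = 1 -> d^-1 <= qform L z.
Proof.
move=> L_sym L_psd d_gt0 Lxx_le b2; set b := (L *m z) x 0 in b2.
have := L_psd (z - (b / d) *: ind R x); rewrite qform_subZind // -/b.
have -> : 2 * (b / d) * b = 2 * b ^+ 2 / d by ring.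
have : (b / d) ^+ 2 * L x x <= d^-1.
  rewrite exprMn b2 mul1r; apply: (le_trans (y := d^-1 ^+ 2 * d)).
  - by rewrite ler_wpM2l // exprn_ge0 // invr_ge0 ltW.
  - by rewrite expr2 -mulrA mulVf ?mulr1 ?lt0r_neq0.
rewrite b2 mulr1; lra.
Qed.

Lemma qform_potential L z u v :
  L *m z = ind R u - ind R v -> qform L z = z u 0 - z v 0.
Proof.
move=> Lz; rewrite /qform -mulmxA Lz mulmxBr.
by rewrite mxE [X in _ + X]mxE !trmx_mul_ind.
Qed.

Lemma effres_qform L X z u v : L^T = L -> is_pinv L X ->
  L *m z = ind R u - ind R v -> effres X u v = qform L z.
Proof.
move=> L_sym [LXL _ _ _] Lz.
rewrite /effres /qform -Lz trmx_mul L_sym.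
by rewrite -[in RHS]LXL !mulmxA.
Qed.

End QuadraticForms.

Section Laplacian.
Variables (R : realType) (n : nat) (A : 'M[R]_n).
Implicit Types (w : 'cV[R]_n).

Lemma degmxE : degmx A = diag_mx (\row_i deg A i).
Proof. by apply/matrixP => i j; rewrite !mxE mulr_natl. Qed.

Lemma laplacian_mulmx w i :
  (laplacian A *m w) i 0 = deg A i * w i 0 - \sum_k A i k * w k 0.
Proof. by rewrite /laplacian mulmxBl degmxE mul_diag_mx !mxE. Qed.

Lemma laplacian_mul_const c : laplacian A *m (const_mx c : 'cV_n) = 0.
Proof.
apply/matrixP => i j; rewrite (ord1 j) laplacian_mulmx !mxE /deg mulr_suml.
by under [X in _ - X]eq_bigr do rewrite mxE; rewrite subrr.
Qed.

Hypothesis A_sym : A^T = A.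

Let A_symE i j : A i j = A j i.
Proof. by rewrite -[in LHS]A_sym mxE. Qed.

Lemma laplacian_sym : (laplacian A)^T = laplacian A.
Proof.
apply/matrixP => i j; rewrite !mxE A_symE.
by case: eqVneq => [->|_]; rewrite ?mul0r.
Qed.

Lemma laplacian_qformE w :
  qform (laplacian A) w = 2^-1 * \sum_i \sum_k A i k * (w i 0 - w k 0) ^+ 2.
Proof.
set q := qform _ w.
have qE : q = \sum_i \sum_k A i k * w i 0 * (w i 0 - w k 0).
  rewrite /q /qform -mulmxA mxE; apply: eq_bigr => i _.
  rewrite laplacian_mulmx !mxE /deg mulr_suml -sumrB mulr_sumr.
  by apply: eq_bigr => k _; ring.
have qE' : q = \sum_i \sum_k A i k * w k 0 * (w k 0 - w i 0).
  rewrite qE exchange_big; apply: eq_bigr => i _; apply: eq_bigr => k _ /=.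
  by rewrite A_symE.
have -> : q = 2^-1 * (q + q) by field.
rewrite {1}qE qE' -big_split; congr (_ * _); apply: eq_bigr => i _.
by rewrite -big_split; apply: eq_bigr => k _ /=; ring.
Qed.

Hypothesis A_ge0 : forall i j, 0 <= A i j.

Lemma laplacian_qform_ge0 w : 0 <= qform (laplacian A) w.
Proof.
rewrite laplacian_qformE mulr_ge0 ?invr_ge0 ?ler0n //.
by do 2!apply: sumr_ge0 => ? _; rewrite mulr_ge0 ?sqr_ge0.
Qed.

Lemma laplacian_diag_le_deg x : laplacian A x x <= deg A x.
Proof. by rewrite !mxE eqxx mul1r lerBlDr lerDl. Qed.

Lemma invdeg_le_effres X z u v x :
  is_pinv (laplacian A) X -> laplacian A *m z = ind R u - ind R v ->
  u != v -> (x == u) || (x == v) -> 0 < deg A x -> (deg A x)^-1 <= effres X u v.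
Proof.
move=> pinv Lz neq x_uv deg_x_gt0.
rewrite (effres_qform laplacian_sym pinv Lz).
apply: invr_le_qform laplacian_sym laplacian_qform_ge0 deg_x_gt0 _ _.
  exact: laplacian_diag_le_deg.
rewrite Lz !mxE; case/orP: x_uv => /eqP ->.
  by rewrite eqxx (negbTE neq) subr0 expr1n.
by rewrite eqxx eq_sym (negbTE neq) sub0r sqrrN expr1n.
Qed.

Lemma deg_ge_entry i j : A i j <= deg A i.
Proof. by rewrite /deg (bigD1 j) //= lerDl sumr_ge0. Qed.

Lemma connected_deg_gt0 u v :
  connected_graph A -> 0 < A u v -> forall i, 0 < deg A i.
Proof.
move=> conn uv i; have [k ik] : exists k, 0 < A i k.
  have [->|iu] := eqVneq i u; first by exists v.
  have /connectP[[|k p] /= path_ik last_eq] := conn i u.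
    by rewrite last_eq eqxx in iu.
  by exists k; case/andP: path_ik.
exact: lt_le_trans ik (deg_ge_entry i k).
Qed.

End Laplacian.

Lemma cvg_mulmx_col (R : realType) m n (M : 'M[R]_(m, n))
    (v : nat -> 'cV[R]_n) (l : 'cV[R]_n) i :
  (forall j, v N j 0 @[N --> \oo] --> l j 0) ->
  (M *m v N) i 0 @[N --> \oo] --> (M *m l) i 0.
Proof.
move=> vl; rewrite mxE; under eq_cvg do rewrite mxE.
apply: cvg_big => [|j _]; first exact: add_continuous.
exact: cvgMl_tmp.
Qed.

Section LazyWalk.
Variables (R : realType) (n : nat) (A : 'M[R]_n).

Definition invdegmx : 'M[R]_n := diag_mx (\row_i (deg A i)^-1).

Definition statvec : 'cV[R]_n := \col_x stat A x.

Definition sigma_partial w N : 'cV[R]_n :=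
  2^-1 *: \sum_(t < N) (iter t (mulmx (lazywalk A)) (ind R w) - statvec).

Lemma lazywalkE : lazywalk A = 2^-1 *: (1%:M + A *m invdegmx).
Proof. by apply/matrixP => i j; rewrite mul_mx_diag !mxE invfM; ring. Qed.

Lemma sigma_partial_entry w N x :
  sigma_partial w N x 0 = 2^-1 * \sum_(t < N) (walk A t w x - stat A x).
Proof. by rewrite !mxE summxE; under eq_bigr do rewrite !mxE. Qed.

Lemma iter_lazywalk_sigma_partial w N :
  iter N (mulmx (lazywalk A)) (ind R w) =
  statvec + 2 *: (sigma_partial w N.+1 - sigma_partial w N).
Proof.
rewrite /sigma_partial big_ord_recr /= -scalerBr addrAC subrr add0r scalerA.
by rewrite mulfV ?pnatr_eq0 // scale1r addrC subrK.
Qed.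

Hypothesis deg_neq0 : forall i, deg A i != 0.

Lemma laplacian_invdeg : laplacian A *m invdegmx = 2 *: (1%:M - lazywalk A).
Proof.
apply/matrixP => i j; rewrite lazywalkE !mul_mx_diag !mxE.
by case: eqVneq => [<-|_] /=; field; exact: deg_neq0.
Qed.

Lemma invdeg_statvec : invdegmx *m statvec = const_mx (\sum_y deg A y)^-1.
Proof.
by apply/matrixP => i j; rewrite mul_diag_mx !mxE /stat mulKf.
Qed.

Lemma lazywalk_statvec : (1%:M - lazywalk A) *m statvec = 0.
Proof.
have := laplacian_mul_const A (\sum_y deg A y)^-1.
rewrite -invdeg_statvec mulmxA laplacian_invdeg -scalemxAl => /eqP.
by rewrite scaler_eq0 pnatr_eq0 => /eqP.
Qed.

Lemma laplacian_sigma_partial w N :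
  laplacian A *m (invdegmx *m sigma_partial w N) =
  ind R w - iter N (mulmx (lazywalk A)) (ind R w).
Proof.
rewrite mulmxA laplacian_invdeg /sigma_partial -scalemxAl -scalemxAr scalerA.
rewrite mulfV ?pnatr_eq0 // scale1r mulmx_sumr.
under eq_bigr do rewrite mulmxBr lazywalk_statvec subr0 mulmxBl mul1mx.
rewrite -opprB -(telescope_sumr (fun t => iter t (mulmx (lazywalk A)) (ind R w))
  (leq0n N)) big_mkord -sumrN.
by apply: eq_bigr => t _; rewrite opprB.
Qed.

Lemma laplacian_invdeg_sigma sig w : is_sigma A sig ->
  laplacian A *m (invdegmx *m \col_x sig w x) = ind R w - statvec.
Proof.
move=> sigma; apply/matrixP => i j; rewrite (ord1 j) mulmxA.
have sp_cvg x : sigma_partial w N x 0 @[N --> \oo] --> (\col_x sig w x) x 0.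
  by rewrite mxE; under eq_cvg do rewrite sigma_partial_entry; exact: sigma.
have L1 := cvg_mulmx_col (M := laplacian A *m invdegmx) (i := i) sp_cvg.
have L2 : (laplacian A *m invdegmx *m sigma_partial w N) i 0 @[N --> \oo]
    --> (ind R w - statvec) i 0.
  have -> : (fun N => (laplacian A *m invdegmx *m sigma_partial w N) i 0) =
      (fun N => (ind R w - statvec) i 0
                - 2 * (sigma_partial w N.+1 i 0 - sigma_partial w N i 0)).
    apply: funext => N; rewrite -mulmxA laplacian_sigma_partial.
    by rewrite iter_lazywalk_sigma_partial !mxE; ring.
  rewrite -[X in _ --> X]subr0 -(mulr0 2) -(subrr ((\col_x sig w x) i 0)).
  apply: cvgB; first exact: cvg_cst.
  apply: cvgMl_tmp; apply: cvgB => //.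
  by have := sp_cvg i; rewrite -cvg_shiftS.
exact: cvg_unique L1 L2.
Qed.

End LazyWalk.

Section Estimate.
Variables (R : realType) (n : nat).

Definition resistance_estimate (d : 'I_n -> R) (s : 'I_n -> 'I_n -> R) u v
  : R :=
  s u u / d u - s u v / d v + s v v / d v - s v u / d u.

Lemma eps_approx_of_dist (eps r rt : R) :
  `|rt - r| <= eps * r -> eps_approx eps r rt.
Proof. by rewrite ler_norml => /andP[lo hi]; split; lra. Qed.

Lemma dist_divr_le (a b d e : R) :
  0 < d -> `|a - b| <= e -> `|a / d - b / d| <= e / d.
Proof.
move=> d_gt0 ab.
by rewrite -mulrBl normrM normfV (gtr0_norm d_gt0) ler_pM2r ?invr_gt0.
Qed.

Lemma resistance_estimate_approx (d : 'I_n -> R) (s s' : 'I_n -> 'I_n -> R)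
    eps u v :
  (forall x, 0 < d x) -> (forall w x, `|s' w x - s w x| <= eps / 4) ->
  0 < eps -> (d u)^-1 <= resistance_estimate d s u v ->
  (d v)^-1 <= resistance_estimate d s u v ->
  eps_approx eps (resistance_estimate d s u v) (resistance_estimate d s' u v).
Proof.
move=> d_gt0 err eps_gt0 lb_u lb_v; apply: eps_approx_of_dist.
have := ler_wpM2l (ltW eps_gt0) lb_u; have := ler_wpM2l (ltW eps_gt0) lb_v.
have err_div w x := dist_divr_le (d_gt0 x) (err w x).
move: (err_div u u) (err_div u v) (err_div v v) (err_div v u).
rewrite /resistance_estimate !ler_norml.
move=> /andP[? ?] /andP[? ?] /andP[? ?] /andP[? ?] ? ?.
by apply/andP; split; lra.
Qed.

End Estimate.

Theorem lemma3p4 (R : realType) (n : nat) (A X : 'M[R]_n)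
    (sig sigt : 'I_n -> 'I_n -> R) (eps : R) :
  A^T = A ->
  (forall i j, 0 <= A i j) ->
  connected_graph A ->
  is_pinv (laplacian A) X ->
  is_sigma A sig ->
  0 < eps ->
  (forall u x, `|sigt u x - sig u x| <= eps / 4) ->
  forall u v, 0 < A u v ->
    eps_approx eps (effres X u v)
      (sigt u u / deg A u - sigt u v / deg A v
       + sigt v v / deg A v - sigt v u / deg A u).
Proof.
move=> A_sym A_ge0 conn pinv sigma eps_gt0 err u v uv.
have deg_gt0 := connected_deg_gt0 A_ge0 conn uv.
have deg_neq0 i : deg A i != 0 by rewrite lt0r_neq0.
set z := invdegmx A *m (\col_x sig u x - \col_x sig v x).
have Lz : laplacian A *m z = ind R u - ind R v.
  by rewrite /z !mulmxBr !laplacian_invdeg_sigma // opprB addrA subrK.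
have resE : effres X u v = resistance_estimate (deg A) sig u v.
  rewrite (effres_qform (laplacian_sym A_sym) pinv Lz) (qform_potential Lz).
  by rewrite /z !mul_diag_mx !mxE /resistance_estimate; ring.
rewrite resE -/(resistance_estimate (deg A) sigt u v).
have [<-|neq] := eqVneq u v.
  by rewrite /resistance_estimate !(subrr, add0r); split; rewrite mulr0.
have lb x : (x == u) || (x == v) ->
    (deg A x)^-1 <= resistance_estimate (deg A) sig u v.
  move=> x_uv; rewrite -resE.
  by rewrite (invdeg_le_effres A_sym A_ge0 pinv Lz neq x_uv (deg_gt0 x)).
apply: resistance_estimate_approx => //; apply: lb; rewrite eqxx ?orbT //.
Qed.
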